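(* Let $0\le r\le n$. Every operator $T=P(x,u_0,\dots,u_r)$, with $P$ a real polynomial, can be written uniquely as a finite sum $$T=p(x)+\sum_{i}p_i(x)K_{ri}+\sum_{i\le j}p_{ij}(x)K_{ri}K_{rj}+\sum_{i\le j\le k}p_{ijk}(x)K_{ri}K_{rj}K_{rk}+\cdots$$ with all indices in $\{0,\dots,r\}$, coefficients $p,p_i,p_{ij},\dots\in\mathbb R[x]$, and products taken pointwise. Moreover $T(\mathcal P_n)\subset\mathcal P_n$ if and only if every coefficient of a term of degree $\ell$ in the $K_{ri}$ lies in $\mathcal P_{\ell r-(\ell-1)n}$; that is, $p\in\mathcal P_n$, $p_i\in\mathcal P_r$, $p_{ij}\in\mathcal P_{2r-n}$, $p_{ijk}\in\mathcal P_{3r-2n}$, etc.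
   Context: Operators of order $\le r$ are identified with polynomials $P(x,u_0,\dots,u_r)$ acting on a smooth $f$ by $P[f](x)=P(x,f(x),f'(x),\dots,f^{(r)}(x))$. $\mathcal P_s$ is the space of real polynomials in $x$ of degree $\le s$, and $\mathcal P_s=\{0\}$ for $s<0$. For $0\le j\le r\le n$, $K_{rj}$ is the linear operator $K_{rj}=\sum_{k=0}^{r-j}(-1)^k\binom{n-k-j}{n-r}\frac{x^k}{k!}u_{k+j}$ (equivalently $K_{rj}=\frac{1}{(r-j)!}(n-j-xD)_{r-j}D^j$ with $D=d/dx$ and $(a-xD)_k=(-1)^k(xD-a)(xD-a+1)\cdots(xD-a+k-1)$). *)

From HB Require Import structures.
From mathcomp Require Import all_boot all_order all_algebra.
From mathcomp Require Import reals.
From mathcomp Require Import mpoly.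
Set Implicit Arguments. Unset Strict Implicit. Unset Printing Implicit Defensive.
Import Order.TTheory GRing.Theory Num.Theory.
Local Open Scope ring_scope.

(* Operators of order <= r: a polynomial P(x,u_0,...,u_r) is represented as a
   polynomial in the variables u_0..u_r ('X_i, i : 'I_r.+1) with coefficients
   in R[x] = {poly R}. *)
Definition operator (R : realType) (r : nat) := {mpoly {poly R}[r.+1]}.

Definition act (R : realType) (r : nat) (T : operator R r) (f : {poly R})
  : {poly R} := mmap idfun (fun i : 'I_r.+1 => f^`(i)) T.

Definition Pspace (R : realType) (s : int) (p : {poly R}) : Prop :=
  if (s < 0)%R then p = 0 else (size p <= `|s|.+1)%N.

Definition preserves (R : realType) (n r : nat) (T : operator R r) : Prop :=
  forall f : {poly R}, Pspace n%:Z f -> Pspace n%:Z (act T f).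

Definition Kop (R : realType) (n r : nat) (j : 'I_r.+1) : operator R r :=
  \sum_(k < (r - j).+1)
     @mpolyC r.+1 {poly R} (((-1) ^+ k * ('C(n - k - j, n - r))%:R / (k`!)%:R) *: ('X : {poly R}) ^+ k)
       * 'X_(inord (k + j)).

Definition Kexpand (R : realType) (n r : nat) (Q : {mpoly {poly R}[r.+1]})
  : operator R r := mmap (@mpolyC r.+1 {poly R}) (@Kop R n r) Q.

(* The substitution u_j |-> K_{rj} is a linear change of variables over R[x]
   whose matrix is triangular with nonzero constant diagonal entries
   binom(n-j, n-r); it is therefore an automorphism of the operator algebra,
   which gives existence and uniqueness of the expansion.

   For m <= n, K_{rj} x^m = m^_j binom(n-m, n-r+j-m) x^(m-j) (an alternating
   binomial identity), so K_{rj} maps P_n into P_(n-r) and sends x^(n-r+j) to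
   a nonzero multiple of x^(n-r). Hence the term p_m K^m maps P_n into
   P_(deg p_m + |m|(n-r)), which proves sufficiency. Conversely, let D be the
   largest value of deg p_m + |m|(n-r). For f = sum_j c_j x^(n-r+j) the
   coefficient of x^D in T f is a nonzero polynomial in the x^(n-r)
   coefficients of the K_{rj} f, which can be prescribed arbitrarily; choosing
   them where that polynomial does not vanish shows D <= n. *)

From HB Require Import structures.
From mathcomp Require Import all_boot all_order all_algebra.
From mathcomp Require Import reals.
From mathcomp Require Import mpoly.
From mathcomp Require Import ring zify.
Set Implicit Arguments. Unset Strict Implicit. Unset Printing Implicit Defensive.
Import Order.TTheory GRing.Theory Num.Theory.
Local Open Scope ring_scope.

Section MpolyMorphismExt.
Context (k : nat) (A : comNzRingType) (S : nzRingType).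
Context (phi psi : {mpoly A[k]} -> S).
Hypothesis phiD : {morph phi : p q / p + q}.
Hypothesis psiD : {morph psi : p q / p + q}.
Hypothesis phiM : {morph phi : p q / p * q}.
Hypothesis psiM : {morph psi : p q / p * q}.
Hypothesis phiC_psiC : forall c, phi c%:MP = psi c%:MP.
Hypothesis phiX_psiX : forall i, phi 'X_i = psi 'X_i.

Lemma eq_mpoly_morph : phi =1 psi.
Proof.
pose P p := phi p = psi p.
have PD p q : P p -> P q -> P (p + q) by rewrite /P phiD psiD => -> ->.
have PM p q : P p -> P q -> P (p * q) by rewrite /P phiM psiM => -> ->.
have P1 : P 1 by rewrite /P -mpolyC1.
have P0 : P 0 by rewrite /P -mpolyC0.
move=> p; rewrite (mpolyE p); apply: (big_ind P P0 PD) => m _.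
rewrite -mul_mpolyC; apply: (PM) => //.
rewrite mpolyXE_id; apply: (big_ind P P1 PM) => i _.
by elim: (m i) => [|e IH]; rewrite ?expr0 // exprS; apply: (PM).
Qed.
End MpolyMorphismExt.

Lemma mmap_mmap (n k : nat) (A : comNzRingType) (S : comNzRingType)
    (f : {rmorphism A -> S}) (h : 'I_k -> S) (F : 'I_n -> {mpoly A[k]}) p :
  mmap f h (mmap (@mpolyC k A) F p) = mmap f (fun j => mmap f h (F j)) p.
Proof.
apply: (eq_mpoly_morph (phi := fun p => mmap f h (mmap (@mpolyC k A) F p))) => /=.
- by move=> a b; rewrite !rmorphD.
- by move=> a b; rewrite rmorphD.
- by move=> a b; rewrite !rmorphM.
- by move=> a b; rewrite rmorphM.
- by move=> c; rewrite !mmapC.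
- by move=> i; rewrite !mmapX !mmap1U.
Qed.

Lemma mmap_id (k : nat) (A : comNzRingType) (p : {mpoly A[k]}) :
  mmap (@mpolyC k A) (fun i => 'X_i) p = p.
Proof.
apply: (eq_mpoly_morph (psi := id)) => //=.
- by move=> a b; rewrite rmorphD.
- by move=> a b; rewrite rmorphM.
- by move=> c; rewrite mmapC.
- by move=> i; rewrite mmapX mmap1U.
Qed.

Lemma poly_eq0_horner (R : numDomainType) (q : {poly R}) :
  (forall t, q.[t] = 0) -> q = 0.
Proof.
move=> q0; apply: (@roots_geq_poly_eq0 _ _ [seq i%:R | i <- iota 0 (size q)]).
- by apply/allP => _ /mapP [i _ ->]; rewrite /root q0.
- by rewrite map_inj_uniq ?iota_uniq // => i j /eqP; rewrite eqr_nat => /eqP.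
- by rewrite size_map size_iota.
Qed.

Section MpolyUni.
Context (k : nat) (R : comNzRingType).

Lemma muniX_lift (j : 'I_k) :
  muni 'X_(lift ord_max j) = ('X_j)%:P :> {poly {mpoly R[k]}}.
Proof.
rewrite /muni mmapX mmap1U; case: splitP => [i /= e|i /= e].
  by congr ('X__)%:P; apply: val_inj => /=; rewrite -e /bump leqNgt ltn_ord.
by move: e; rewrite /bump leqNgt ltn_ord; have := ltn_ord j; lia.
Qed.

Lemma muniX_max : muni 'X_ord_max = 'X :> {poly {mpoly R[k]}}.
Proof.
rewrite /muni mmapX mmap1U; case: splitP => [i /= e|//].
by have := ltn_ord i; rewrite -e ltnn.
Qed.

Lemma mwidenXU (j : 'I_k) : mwiden 'X_j = 'X_(lift ord_max j) :> {mpoly R[k.+1]}.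
Proof.
rewrite mwidenX mnmwiden1; congr 'X_[U_(_)].
by apply: val_inj; rewrite /= /bump leqNgt ltn_ord.
Qed.

Lemma mmultiE (q : {poly {mpoly R[k]}}) :
  mmulti q = (map_poly (@mwiden k R) q).['X_ord_max].
Proof.
rewrite horner_coef (size_map_inj_poly (@inj_mwiden _ _) (mwiden0 _ _)).
by apply: eq_bigr => i _; rewrite coef_map.
Qed.

Lemma muniK : cancel (@muni k R) (@mmulti k R).
Proof.
move=> p; rewrite mmultiE.
apply: (eq_mpoly_morph (phi := fun p => (map_poly (@mwiden k R) (muni p)).['X_ord_max]))
  => //=.
- by move=> a b; rewrite !rmorphD hornerD.
- by move=> a b; rewrite !rmorphM hornerM.
- by move=> c; rewrite muniC map_polyC hornerC /= mwidenC.
move=> i; case: (unliftP ord_max i) => [j ->|->].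
  by rewrite muniX_lift map_polyC hornerC /= mwidenXU.
by rewrite muniX_max map_polyX hornerX.
Qed.

Definition extend_last (T : Type) (v : 'I_k -> T) (t : T) (i : 'I_k.+1) : T :=
  if unlift ord_max i is Some j then v j else t.

Lemma meval_muni (v : 'I_k -> R) (t : R) (p : {mpoly R[k.+1]}) :
  p.@[extend_last v t] = (map_poly (meval v) (muni p)).[t].
Proof.
apply: (eq_mpoly_morph (psi := fun p => (map_poly (meval v) (muni p)).[t])) => //=.
- exact: mevalD.
- by move=> a b; rewrite !rmorphD hornerD.
- exact: mevalM.
- by move=> a b; rewrite !rmorphM hornerM.
- by move=> c; rewrite mevalC muniC map_polyC hornerC /= mevalC.
move=> i; rewrite mevalXU /extend_last; case: (unliftP ord_max i) => [j ->|->].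
  by rewrite muniX_lift map_polyC hornerC /= mevalXU.
by rewrite muniX_max map_polyX hornerX.
Qed.
End MpolyUni.

Lemma mpoly_eq0_meval (R : numDomainType) (k : nat) (p : {mpoly R[k]}) :
  (forall v, p.@[v] = 0) -> p = 0.
Proof.
elim: k p => [|k IHk] p p0.
  by move: (p0 (fun _ => 0)); rewrite [p]nvar0_mpolyC mevalC => ->.
suff muni_p0 : muni p = 0 by rewrite -(muniK p) muni_p0 /mmulti size_poly0 big_ord0.
apply/polyP => d; rewrite coef0; apply: IHk => v.
rewrite -coef_map (_ : map_poly _ _ = 0) ?coef0 //.
by apply: poly_eq0_horner => t; rewrite -meval_muni.
Qed.

Section AltBinomial.
Context (R : pzRingType) (N : nat).

(* With t = m - j and M = n - j this is the sum computing K_{rj} x^m. *)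
Definition alt_binom_sum (t M : nat) : R :=
  \sum_(k < M.+1) (-1) ^+ k * ('C(M - k, N) * 'C(t, k))%:R.

Lemma alt_binom_sumSS t M :
  alt_binom_sum t.+1 M.+1 = alt_binom_sum t M.+1 - alt_binom_sum t M.
Proof.
rewrite /alt_binom_sum [LHS]big_ord_recl [X in _ = X - _]big_ord_recl /=.
rewrite !bin0 !muln1 !expr0 !mul1r -addrA; congr (_ + _).
rewrite -sumrB; apply: eq_bigr => k _.
by rewrite /bump /= !add1n subSS binS mulnDr natrD mulrDr exprS mulN1r !mulNr.
Qed.

Lemma alt_binom_sumE t M : (t <= M)%N ->
  alt_binom_sum t M = (if (t <= N)%N then 'C(M - t, N - t) else 0)%:R.
Proof.
elim: t M => [|t IHt] M.
  move=> _; rewrite /alt_binom_sum big_ord_recl /= expr0 mul1r bin0 muln1 !subn0.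
  by rewrite big1 ?addr0 // => k _; rewrite bin0n muln0 mulr0.
case: M => [//|M] ltM.
rewrite alt_binom_sumSS !IHt ?(ltnW ltM) //.
case: (ltngtP t N) => [ltN|gtN|->]; last by rewrite subnn !bin0 subrr.
- have e1 : (N - t = (N - t.+1).+1)%N by rewrite subnS prednK // subn_gt0.
  have e2 : (M.+1 - t = (M - t).+1)%N by rewrite subSn.
  by rewrite e1 e2 binS natrD subSS addrC addKr.
- by rewrite subrr.
Qed.
End AltBinomial.

Lemma ffactnD m j k : m ^_ (k + j) = (m ^_ j * (m - j) ^_ k)%N.
Proof.
elim: k => [|k IHk]; first by rewrite ffactn0 muln1.
by rewrite addSn !ffactnSr IHk -mulnA; congr (_ * (_ * _))%N; lia.
Qed.

Section KopAction.
Context (R : realType) (n r : nat).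
Local Notation N := (n - r)%N.
Local Notation K := (@Kop R n r).

Definition kcoef (j k : nat) : R := (-1) ^+ k * ('C(n - k - j, N))%:R / (k`!)%:R.

Lemma act_Kop (j : 'I_r.+1) (f : {poly R}) :
  act (K j) f = \sum_(k < (r - j).+1) (kcoef j k *: 'X^k) * f^`(k + j).
Proof.
rewrite /act /Kop raddf_sum /=; apply: eq_bigr => k _.
rewrite mul_mpolyC mmapZ mmapX mmap1U inordK //.
by have := ltn_ord k; have := ltn_ord j; lia.
Qed.

Definition Kfactor (j m : nat) : R := \sum_(k < (r - j).+1) kcoef j k * (m ^_ (k + j))%:R.

Lemma act_Kop_Xn (j : 'I_r.+1) m : act (K j) 'X^m = Kfactor j m *: 'X^(m - j).
Proof.
rewrite act_Kop /Kfactor scaler_suml; apply: eq_bigr => k _.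
rewrite derivnXn -scalerAl -mulr_natr mulrA -exprD.
have [le_kj_m|lt_m_kj] := leqP (k + j) m; last first.
  by rewrite ffact_small // !mulr0 scaler0 scale0r.
by rewrite (_ : k + _ = m - j)%N ?mulr_natr -?scalerMnl -?scalerMnr //; lia.
Qed.

Lemma KfactorE (j : 'I_r.+1) m : (r <= n)%N -> (m <= n)%N ->
  Kfactor j m = if (j <= m <= N + j)%N then (m ^_ j * 'C(n - m, N + j - m))%:R else 0.
Proof.
move=> le_rn le_mn; rewrite /Kfactor.
have [le_jm|lt_mj] := leqP j m; last first.
  by rewrite big1 // => k _; rewrite ffact_small ?mulr0 //; lia.
transitivity ((m ^_ j)%:R * alt_binom_sum R N (m - j) (n - j)).
  have le_rj_nj : ((r - j).+1 <= (n - j).+1)%N by lia.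
  rewrite /alt_binom_sum mulr_sumr.
  rewrite (big_ord_widen _ (fun k => kcoef j k * (m ^_ (k + j))%:R) le_rj_nj) big_mkcond /=.
  apply: eq_bigr => k _; case: ifP => lt_k_rj; last first.
    rewrite (@bin_small (n - j - k)) ?mul0n ?mulr0 //.
    by move/negbT: lt_k_rj; have := ltn_ord k; lia.
  rewrite ffactnD -(bin_ffact (m - j) k) /kcoef (_ : n - k - j = n - j - k)%N; last lia.
  have kfact_neq0 : (k`!)%:R != 0 :> R by rewrite pnatr_eq0 -lt0n fact_gt0.
  by rewrite !natrM; field.
rewrite alt_binom_sumE; last lia.
rewrite /= (_ : m <= N + j = (m - j <= N))%N; last lia.
case: ifP => _; last by rewrite mulr0.
by rewrite natrM (_ : n - j - _ = n - m)%N 1?(_ : N - _ = N + j - m)%N //; lia.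
Qed.

Lemma size_act_Kop_Xn (j : 'I_r.+1) m : (r <= n)%N -> (m <= n)%N ->
  (size (act (K j) 'X^m) <= N.+1)%N.
Proof.
move=> le_rn le_mn; rewrite act_Kop_Xn KfactorE //.
case: ifP => [/andP [le_jm le_m_Nj]|_]; last by rewrite scale0r size_poly0.
by apply: leq_trans (size_scale_leq _ _) _; rewrite size_polyXn; lia.
Qed.

Lemma coef_act_Kop_Xn (j : 'I_r.+1) m : (r <= n)%N -> (m <= n)%N ->
  (act (K j) 'X^m)`_N = if m == (N + j)%N then ((N + j) ^_ j)%:R else 0.
Proof.
move=> le_rn le_mn; rewrite act_Kop_Xn coefZ coefXn KfactorE //.
have [->|ne_m_Nj] := eqVneq m (N + j)%N.
  by rewrite leq_addl leqnn addnK eqxx subnn bin0 muln1 mulr1.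
case: ifP => [/andP [le_jm _]|_]; last by rewrite mul0r.
by rewrite (_ : (N == m - j)%N = false) ?mulr0 //; apply/negbTE; lia.
Qed.

Lemma act_KopD (j : 'I_r.+1) : {morph act (K j) : f g / f + g}.
Proof.
move=> f g; rewrite !act_Kop -big_split /=.
by apply: eq_bigr => k _; rewrite derivnD mulrDr.
Qed.

Lemma act_KopZ (j : 'I_r.+1) a f : act (K j) (a *: f) = a *: act (K j) f.
Proof.
rewrite !act_Kop scaler_sumr; apply: eq_bigr => k _.
by rewrite derivnZ scalerAr.
Qed.

Lemma act_Kop_sum (j : 'I_r.+1) (I : Type) (s : seq I) (F : I -> {poly R}) :
  act (K j) (\sum_(i <- s) F i) = \sum_(i <- s) act (K j) (F i).
Proof.
have act_K0 : act (K j) 0 = 0 by have := act_KopZ j 0 0; rewrite !scale0r.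
exact: (big_morph _ (act_KopD j) act_K0).
Qed.

Lemma act_Kop_poly (j : 'I_r.+1) (f : {poly R}) :
  act (K j) f = \sum_(i < size f) f`_i *: act (K j) 'X^i.
Proof.
rewrite -[in LHS](coefK f) poly_def act_Kop_sum.
by apply: eq_bigr => i _; apply: act_KopZ.
Qed.

Lemma size_act_Kop (j : 'I_r.+1) (f : {poly R}) : (r <= n)%N -> (size f <= n.+1)%N ->
  (size (act (K j) f) <= N.+1)%N.
Proof.
move=> le_rn le_f_n; rewrite act_Kop_poly.
apply: leq_trans (size_sum _ _ _) _; apply/bigmax_leqP => i _.
apply: leq_trans (size_scale_leq _ _) (size_act_Kop_Xn _ le_rn _).
by have := ltn_ord i; lia.
Qed.
End KopAction.

Section LinearSubst.
Context (k : nat) (A : comNzRingType).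
Implicit Types (M P : 'M[A]_k) (p : {mpoly A[k]}).

Definition linvar M (j : 'I_k) : {mpoly A[k]} := \sum_i (M i j)%:MP * 'X_i.
Definition subst_lin M p : {mpoly A[k]} := mmap (@mpolyC k A) (linvar M) p.

Lemma subst_lin_linvar M P j : subst_lin M (linvar P j) = linvar (M *m P) j.
Proof.
rewrite /linvar /subst_lin raddf_sum /=.
transitivity (\sum_(i < k) \sum_(l < k) ((P i j * M l i)%:MP * 'X_l : {mpoly A[k]})).
  apply: eq_bigr => i _; rewrite mul_mpolyC mmapZ mmapX mmap1U /= mulr_sumr.
  by apply: eq_bigr => l _; rewrite mulrA -rmorphM.
rewrite exchange_big; apply: eq_bigr => l _.
rewrite mxE rmorph_sum mulr_suml; apply: eq_bigr => i _.
by rewrite [M l i * _]mulrC.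
Qed.

Lemma linvar1 j : linvar 1%:M j = 'X_j.
Proof.
rewrite /linvar (bigD1 j) //= mxE eqxx /= mul1r big1 ?addr0 // => i ne_ij.
by rewrite mxE (negbTE ne_ij) mul0r.
Qed.

Lemma subst_linK M P p : M *m P = 1%:M -> subst_lin M (subst_lin P p) = p.
Proof.
move=> MP1; rewrite /subst_lin mmap_mmap -[RHS]mmap_id /mmap.
apply: eq_bigr => m _; congr (_ * _); apply: mmap1_eq => j.
by have := subst_lin_linvar M P j; rewrite MP1 linvar1.
Qed.
End LinearSubst.

Section Kmatrix.
Context (R : realType) (n r : nat).
Local Notation K := (@Kop R n r).

Definition Kmx : 'M[{poly R}]_r.+1 :=
  \matrix_(i, j) if (j <= i)%N then kcoef R n r j (i - j) *: 'X^(i - j) else 0.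

Lemma Kop_linvar j : K j = linvar Kmx j.
Proof.
pose G i : {mpoly {poly R}[r.+1]} := (Kmx (inord i) j)%:MP * 'X_(inord i).
have le_j_r1 : (j <= r.+1)%N by apply: ltnW.
rewrite /linvar (eq_bigr (fun i : 'I_r.+1 => G i)) => [|i _]; last first.
  by rewrite /G inord_val.
rewrite -(big_mkord xpredT G) (@big_cat_nat _ _ _ j 0 r.+1) /=; last 2 first.
- exact: leq0n.
- exact: le_j_r1.
rewrite [X in _ = X + _]big1_seq => [|i /andP [_]]; last first.
  rewrite mem_index_iota => /andP [_ lt_ij].
  rewrite /G mxE inordK; last exact: ltn_trans lt_ij _.
  by rewrite leqNgt lt_ij mul0r.
rewrite [RHS]add0r -[in RHS](add0n j) big_addn (_ : r.+1 - j = (r - j).+1)%N; last first.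
  by have := ltn_ord j; lia.
rewrite big_mkord; apply: eq_bigr => k _.
rewrite /G mxE inordK; last by have := ltn_ord k; have := ltn_ord j; lia.
by rewrite leq_addl addnK.
Qed.

Lemma Kmx_unit : Kmx \in unitmx.
Proof.
rewrite unitmxE det_trig; last first.
  by apply/is_trig_mxP => i j lt_ij; rewrite mxE leqNgt lt_ij.
apply: unitr_prod => j _; rewrite mxE leqnn subnn expr0 alg_polyC.
have kcoef0_neq0 : kcoef R n r j 0 != 0.
  rewrite /kcoef expr0 mul1r fact0 divr1 subn0 pnatr_eq0 -lt0n bin_gt0.
  by have := ltn_ord j; lia.
by rewrite poly_unitE size_polyC kcoef0_neq0 coefC /= unitfE.
Qed.

Lemma Kexpand_subst_lin (Q : {mpoly {poly R}[r.+1]}) :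
  Kexpand n Q = subst_lin Kmx Q.
Proof.
by apply: eq_bigr => m _; congr (_ * _); apply: mmap1_eq => j; rewrite Kop_linvar.
Qed.

Lemma Kexpand_exists_unique (T : operator R r) : exists! Q, T = Kexpand n Q.
Proof.
exists (subst_lin (invmx Kmx) T); split.
  by rewrite Kexpand_subst_lin subst_linK // mulmxV // Kmx_unit.
by move=> Q ->; rewrite Kexpand_subst_lin subst_linK // mulVmx // Kmx_unit.
Qed.
End Kmatrix.

Section TopCoef.
Context (K : nzRingType).

Lemma size_coef_topM (a b : {poly K}) (A B : nat) :
  (size a <= A.+1)%N -> (size b <= B.+1)%N ->
  (size (a * b)%R <= (A + B).+1)%N /\ (a * b)`_(A + B) = a`_A * b`_B.
Proof.
move=> le_a le_b; split; first by apply: leq_trans (size_polyMleq _ _) _; lia.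
have lt_A : (A < (A + B).+1)%N by lia.
rewrite coefM (bigD1 (Ordinal lt_A)) //= (_ : A + B - A = B)%N; last lia.
rewrite big1 ?addr0 // => i /eqP ne_iA.
case: (ltngtP i A) => [lt_iA|lt_Ai|eq_iA]; last by case: ne_iA; apply: val_inj.
- rewrite [b`__]nth_default ?mulr0 //; apply: leq_trans le_b _.
  by have := ltn_ord i; lia.
- by rewrite nth_default ?mul0r //; apply: leq_trans le_a lt_Ai.
Qed.

Lemma size_coef_topX (g : {poly K}) (d e : nat) : (size g <= d.+1)%N ->
  (size (g ^+ e)%R <= (e * d).+1)%N /\ (g ^+ e)`_(e * d) = g`_d ^+ e.
Proof.
move=> le_g; elim: e => [|e [IH1 IH2]]; first by rewrite !expr0 size_poly1 coefC.
have [le_ge coef_ge] := size_coef_topM le_g IH1.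
by rewrite exprS mulSn; split => //; rewrite coef_ge IH2 exprS.
Qed.

Lemma size_coef_top_prod (I : Type) (s : seq I) (F : I -> {poly K}) (d : I -> nat) :
  (forall i, (size (F i) <= (d i).+1)%N) ->
  (size (\prod_(i <- s) F i)%R <= (\sum_(i <- s) d i).+1)%N /\
  (\prod_(i <- s) F i)`_(\sum_(i <- s) d i) = \prod_(i <- s) (F i)`_(d i).
Proof.
move=> le_F; elim: s => [|a s [IH1 IH2]]; first by rewrite !big_nil size_poly1 coefC.
have [le_Fs coef_Fs] := size_coef_topM (le_F a) IH1.
by rewrite !big_cons; split => //; rewrite coef_Fs IH2.
Qed.
End TopCoef.

Lemma eq_bigmax_seq (I : eqType) (s : seq I) (F : I -> nat) : s != [::] ->
  exists2 x, x \in s & \max_(i <- s) F i = F x.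
Proof.
elim: s => [//|a s IHs] _; rewrite big_cons.
have [->|ne_s] := eqVneq s [::].
  by exists a; rewrite ?mem_seq1 // big_nil maxn0.
have [x xs ->] := IHs ne_s.
have [le_a|lt_a] := leqP (F a) (F x).
  by exists x; rewrite ?inE ?xs ?orbT // (maxn_idPr _).
by exists a; rewrite ?inE ?eqxx // (maxn_idPl _) // ltnW.
Qed.

Lemma Pspace_nat (R : realType) (d : nat) (p : {poly R}) :
  Pspace d%:Z p <-> (size p <= d.+1)%N.
Proof. by rewrite /Pspace ltz_nat ltn0 absz_nat. Qed.

Lemma Pspace_weighted (R : realType) (n r d : nat) (q : {poly R}) : (r <= n)%N ->
  Pspace (d%:Z * r%:Z - (d%:Z - 1) * n%:Z) q <->
  q = 0 \/ ((size q).-1 + d * (n - r) <= n)%N.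
Proof.
move=> le_rn.
have -> : d%:Z * r%:Z - (d%:Z - 1) * n%:Z = n%:Z - (d * (n - r))%:Z.
  by rewrite PoszM -(subzn le_rn); ring.
rewrite /Pspace; have [le_dN_n|lt_n_dN] := leqP (d * (n - r)) n.
  rewrite (_ : n%:Z - _ < 0 = false); last by apply/negbTE; lia.
  rewrite (_ : `|n%:Z - (d * (n - r))%:Z|%N = n - d * (n - r))%N; last lia.
  split => [le_q|[->|]]; last 2 first.
  - by rewrite size_poly0.
  - by case: (size q) => //= k; lia.
  by have [->|nz_q] := eqVneq q 0; [left|right; lia].
rewrite (_ : n%:Z - _ < 0 = true); last by apply/idP; lia.
by split => [|[//|]]; [left|lia].
Qed.

Section Preserves.
Context (R : realType) (n r : nat) (le_rn : (r <= n)%N).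
Local Notation N := (n - r)%N.
Local Notation K := (@Kop R n r).
Implicit Types (f : {poly R}) (Q : {mpoly {poly R}[r.+1]}).

Lemma act_Kexpand Q f :
  act (Kexpand n Q) f = \sum_(m <- msupp Q) Q@_m * mmap1 (fun j => act (K j) f) m.
Proof. by rewrite /act /Kexpand mmap_mmap. Qed.

Lemma size_coef_top_Kmonomial f (m : 'X_{1..r.+1}) : (size f <= n.+1)%N ->
  (size (mmap1 (fun j => act (K j) f) m) <= (mdeg m * N).+1)%N /\
  (mmap1 (fun j => act (K j) f) m)`_(mdeg m * N) = \prod_i (act (K i) f)`_N ^+ m i.
Proof.
move=> le_f_n; rewrite mdegE big_distrl /mmap1 /=.
have topX i := size_coef_topX (m i) (size_act_Kop i le_rn le_f_n).
have [size_prod coef_prod] := size_coef_top_prod (index_enum 'I_r.+1)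
  (fun i => (topX i).1).
by split => //; rewrite coef_prod; apply: eq_bigr => i _; rewrite (topX i).2.
Qed.

Definition wdeg Q (m : 'X_{1..r.+1}) : nat := ((size Q@_m).-1 + mdeg m * N)%N.

Lemma preserves_Kexpand Q :
  (forall m, Q@_m = 0 \/ (wdeg Q m <= n)%N) ->
  preserves n (Kexpand n Q).
Proof.
move=> deg_Q f /Pspace_nat le_f_n; apply/Pspace_nat; rewrite act_Kexpand.
apply: leq_trans (size_sum _ _ _) _; apply/bigmax_leqP_seq => m _ _.
have [->|le_Qm] := deg_Q m; first by rewrite mul0r size_poly0.
have [size_m _] := size_coef_top_Kmonomial m le_f_n.
have [size_Qm _] := size_coef_topM (leqSpred (size Q@_m)) size_m.
exact: leq_trans size_Qm _.
Qed.

Definition test_poly (v : 'I_r.+1 -> R) : {poly R} :=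
  \sum_i (v i / ((N + i) ^_ i)%:R) *: 'X^(N + i).

Lemma size_test_poly v : (size (test_poly v) <= n.+1)%N.
Proof.
apply: leq_trans (size_sum _ _ _) _; apply/bigmax_leqP => i _.
by apply: leq_trans (size_scale_leq _ _) _; rewrite size_polyXn; have := ltn_ord i; lia.
Qed.

Lemma coef_act_Kop_test_poly v j : (act (K j) (test_poly v))`_N = v j.
Proof.
rewrite /test_poly act_Kop_sum coef_sum (bigD1 j) //= big1 ?addr0 => [|i ne_ij].
  rewrite act_KopZ coefZ coef_act_Kop_Xn // ?eqxx; last by have := ltn_ord j; lia.
  by rewrite divfK // pnatr_eq0 -lt0n ffact_gt0 leq_addl.
rewrite act_KopZ coefZ coef_act_Kop_Xn //; last by have := ltn_ord i; lia.
by rewrite eqn_add2l (inj_eq val_inj) (negbTE ne_ij) mulr0.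
Qed.

Definition top_form Q (D : nat) : {mpoly R[r.+1]} :=
  \sum_(m <- msupp Q | wdeg Q m == D) lead_coef Q@_m *: 'X_[m].

Lemma coef_act_Kexpand_top Q f (D : nat) : (size f <= n.+1)%N ->
  (forall m, m \in msupp Q -> (wdeg Q m <= D)%N) ->
  (act (Kexpand n Q) f)`_D = (top_form Q D).@[fun i => (act (K i) f)`_N].
Proof.
move=> le_f_n le_D; rewrite act_Kexpand coef_sum /top_form rmorph_sum /=.
rewrite [RHS]big_mkcond /=; apply: eq_big_seq => m m_in.
have [size_m coef_m] := size_coef_top_Kmonomial m le_f_n.
have [size_Qm coef_Qm] := size_coef_topM (leqSpred (size Q@_m)) size_m.
case: eqP => [<-|ne_D]; first by rewrite mevalZ mevalX /wdeg coef_Qm coef_m lead_coefE.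
rewrite nth_default //; apply: leq_trans size_Qm _.
by rewrite ltn_neqAle le_D // andbT; apply/eqP.
Qed.

Lemma top_form_neq0 Q m : m \in msupp Q -> top_form Q (wdeg Q m) != 0.
Proof.
move=> m_in; apply/eqP => /(congr1 (mcoeff m)); rewrite raddf_sum mcoeff0 /=.
rewrite big_mkcond (bigD1_seq m) ?msupp_uniq //= eqxx mcoeffZ mcoeffX eqxx mulr1.
rewrite big1 ?addr0 => [/eqP|m' ne_m']; last first.
  by case: ifP => // _; rewrite mcoeffZ mcoeffX (negbTE ne_m') mulr0.
by rewrite lead_coef_eq0; apply/negP; rewrite -mcoeff_msupp.
Qed.

Lemma wdeg_le_of_preserves Q : preserves n (Kexpand n Q) ->
  forall m, Q@_m = 0 \/ (wdeg Q m <= n)%N.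
Proof.
move=> pres m0; have [->|] := eqVneq Q@_m0 0; first by left.
rewrite -mcoeff_msupp => m0_in; right.
pose D := \max_(m <- msupp Q) wdeg Q m.
have le_D m : m \in msupp Q -> (wdeg Q m <= D)%N.
  by move=> m_in; apply: (leq_bigmax_seq (P := xpredT) (F := wdeg Q)) m_in _.
have [ms ms_in D_ms] : exists2 m, m \in msupp Q & D = wdeg Q m.
  by apply: eq_bigmax_seq; apply: contraTneq m0_in => ->.
apply: leq_trans (le_D _ m0_in) _; rewrite leqNgt; apply/negP => lt_n_D.
apply/negP: (top_form_neq0 ms_in); apply/negPn/eqP; apply: mpoly_eq0_meval => v.
have coef_v i : (act (K i) (test_poly v))`_N = v i by exact: coef_act_Kop_test_poly.
rewrite -(meval_eq _ coef_v) -D_ms -coef_act_Kexpand_top ?size_test_poly //.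
apply: nth_default; apply: leq_trans lt_n_D.
by have /Pspace_nat := pres _ (proj2 (Pspace_nat _ _) (size_test_poly v)).
Qed.
Lemma preserves_KexpandP Q :
  preserves n (Kexpand n Q) <-> forall m, Q@_m = 0 \/ (wdeg Q m <= n)%N.
Proof. by split; [exact: wdeg_le_of_preserves | exact: preserves_Kexpand]. Qed.
End Preserves.

Theorem mainTheorem3 (R : realType) (n r : nat) (hrn : (r <= n)%N)
  (T : operator R r) :
  (exists! Q : {mpoly {poly R}[r.+1]}, T = Kexpand n Q) /\
  (forall Q : {mpoly {poly R}[r.+1]}, T = Kexpand n Q ->
     (preserves n T <->
      forall m : 'X_{1..r.+1},
        Pspace ((mdeg m)%:Z * r%:Z - ((mdeg m)%:Z - 1) * n%:Z) (Q@_m))).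
Proof.
split; first exact: Kexpand_exists_unique.
move=> Q ->; rewrite preserves_KexpandP //.
have Pspace_wdeg m := Pspace_weighted (mdeg m) (Q@_m) hrn.
by split => deg_Q m; apply/Pspace_wdeg; exact: deg_Q.
Qed.
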